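(* Let $\alpha<0$, let $f=(1-\alpha\varphi)^{1/\alpha}\in\mathcal{C}^+_\alpha(\mathbb{R}^n)$, let $0\le l<n$ and $p\ge 0$. If $-\frac{1}{n-l+p}<\alpha$, then $$\int_{\mathbb{R}^n}|x|^p\,\big(1-\alpha\varphi(x)\big)^{\frac1\alpha-l}\,dx<+\infty .$$ In particular, if $-\frac1n<\alpha<0$, then $\int_{\mathbb{R}^n}f(x)\,dx<+\infty$ and $\int_{\mathbb{R}^n}f(x)^{1-\alpha}\,dx<+\infty$.
   Context: $\mathrm{Conv}(\mathbb{R}^n)$ denotes the set of proper, convex, lower semi-continuous functions $\varphi:\mathbb{R}^n\to\mathbb{R}\cup\{+\infty\}$. A function $\varphi$ is coercive if $\liminf_{|x|\to\infty}\varphi(x)/|x|>0$. For $\alpha<0$, $\mathcal{C}^+_\alpha(\mathbb{R}^n)$ is the set of functions $f=(1-\alpha\varphi)^{1/\alpha}$ where $\varphi\in\mathrm{Conv}(\mathbb{R}^n)$ is nonnegative and coercive ($\varphi$ is called the base of $f$), with the convention that $f(x)=0$ (and $(1-\alpha\varphi(x))^{s}=0$ for $s<0$) when $\varphi(x)=+\infty$. *)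

From HB Require Import structures.
From mathcomp Require Import all_boot all_order all_algebra.
From mathcomp Require Import all_classical all_reals all_analysis.
Set Implicit Arguments. Unset Strict Implicit. Unset Printing Implicit Defensive.
Import Order.TTheory GRing.Theory Num.Theory.
Import numFieldNormedType.Exports.
Local Open Scope classical_set_scope.
Local Open Scope ring_scope.

Section Defs.
Context {R : realType}.

Definition enorm (n : nat) (x : 'rV[R]_n) : R :=
  Num.sqrt (\sum_(i < n) x ord0 i ^+ 2).

(* Lebesgue integral over R^n of a function with values in \bar R, written as
   the iterated integral  \int dx_1 ... \int dx_n F(x_1,...,x_n)
   w.r.t. the one-dimensional Lebesgue measure (equal to the integral w.r.t.
   n-dimensional Lebesgue measure for nonnegative Borel functions, by Tonelli). *)
Fixpoint integral_Rn (n : nat) : ('rV[R]_n -> \bar R) -> \bar R :=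
  match n with
  | 0 => fun F => F 0
  | m.+1 => fun F =>
      (\int[@lebesgue_measure R]_t
         integral_Rn (fun v : 'rV[R]_m => F (row_mx (\row_(j < 1) t) v)))%E
  end.

Definition in_Conv (n : nat) (phi : 'rV[R]_n -> \bar R) : Prop :=
  [/\ (exists x, phi x < +oo)%E,
      (forall x, phi x > -oo)%E,
      (forall (x y : 'rV[R]_n) (t : R), 0 < t < 1 ->
         (phi ((1 - t) *: x + t *: y)%R <= (1 - t)%:E * phi x + t%:E * phi y)%E)
    & lower_semicontinuous phi].

(* coercive: liminf_{|x| -> oo} phi(x)/|x| > 0, i.e. there is c > 0 such that
   phi(x) >= c |x| for all x of sufficiently large norm. *)
Definition coercive (n : nat) (phi : 'rV[R]_n -> \bar R) : Prop :=
  exists c : R, 0 < c /\ exists M : R,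
    forall x, M <= enorm x -> ((c * enorm x)%:E <= phi x)%E.

Definition is_base (n : nat) (phi : 'rV[R]_n -> \bar R) : Prop :=
  [/\ in_Conv phi, (forall x, (0 <= phi x)%E) & coercive phi].

(* (1 - alpha phi(x))^s, with the convention that it is 0 when phi(x) = +oo
   (used with s < 0). *)
Definition powbase (n : nat) (alpha : R) (phi : 'rV[R]_n -> \bar R) (s : R)
  (x : 'rV[R]_n) : R :=
  match phi x with
  | r%:E => powR (1 - alpha * r) s
  | _ => 0
  end.

Definition fCalpha (n : nat) (alpha : R) (phi : 'rV[R]_n -> \bar R)
  (x : 'rV[R]_n) : R := powbase alpha phi alpha^-1 x.

End Defs.

From HB Require Import structures.
From mathcomp Require Import all_boot all_order all_algebra.
From mathcomp Require Import all_classical all_reals all_analysis.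
From mathcomp Require Import measurable_realfun lra.
Import Order.TTheory GRing.Theory Num.Theory.
Import numFieldNormedType.Exports.
Local Open Scope classical_set_scope.
Local Open Scope ring_scope.

(* Since phi >= 0 is coercive and alpha < 0, 1 - alpha phi(x) >= k (1 + |x|)
   for some k > 0; with e := 1/alpha - l < 0 this gives
   |x|^p (1 - alpha phi(x))^e <= k^e (1 + |x|)^(p + e).  As
   prod_i (1 + |x_i|) <= (1 + |x|)^n and p + e <= 0, the right-hand side is at
   most k^e prod_i (1 + |x_i|)^((p + e)/n), whose iterated integral is
   k^e (2/(s - 1))^n with s = -(p + e)/n, and s > 1 is exactly
   alpha > -1/(n - l + p).  The two special cases are l = 0 and l = 1, p = 0,
   since f^(1 - alpha) = (1 - alpha phi)^(1/alpha - 1). *)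

(* No measurability is needed: for nonnegative functions the integral is a
   supremum over the simple functions below them. *)
Lemma ge0_le_integralT d (T : measurableType d) (R : realType)
    (mu : {measure set T -> \bar R}) (f g : T -> \bar R) :
  (forall x, 0 <= f x)%E -> (forall x, f x <= g x)%E ->
  (\int[mu]_x f x <= \int[mu]_x g x)%E.
Proof.
move=> f0 fg; have g0 x : (0 <= g x)%E := le_trans (f0 x) (fg x).
rewrite !ge0_integralTE//; apply: ereal_sup_le => _ [h /= hf <-].
by exists h => //= x; exact: le_trans (hf x) (fg x).
Qed.

Section powR_decay.
Context {R : realType}.
Local Notation mu := (@lebesgue_measure R).

Lemma le0_ger_powR (r a b : R) : r <= 0 -> 0 < a -> a <= b -> b `^ r <= a `^ r.
Proof.
move=> r0 a0 ab; have b0 : 0 < b := lt_le_trans a0 ab.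
have powRNN y : y `^ r = (y `^ (- r))^-1 by rewrite -powRN opprK.
rewrite !powRNN lef_pV2 ?posrE ?powR_gt0//.
by apply: ge0_ler_powR; rewrite ?nnegrE ?oppr_ge0// ltW.
Qed.

Lemma powR_continuous (r a : R) :
  0 < a -> {for a, continuous (fun b : R => b `^ r)}.
Proof.
move=> a0; apply/differentiable_continuous/derivable1_diffP.
by apply: derivable_powR; rewrite in_itv /= andbT.
Qed.

Lemma powR_cvgy_lt0 (r : R) : r < 0 -> x `^ r @[x --> +oo] --> 0.
Proof.
move=> r0; apply/cvgr0Pnorm_le => e e0.
near=> x; have x0 : 0 < x by near: x; exact: nbhs_pinfty_gt.
have xe : e `^ r^-1 <= x by near: x; apply: nbhs_pinfty_ge; rewrite num_real.
rewrite ger0_norm ?powR_ge0// -[leRHS](powRr1 (ltW e0)) -(mulVf (ltr0_neq0 r0)).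
by rewrite powRrM le0_ger_powR ?powR_gt0// ltW.
Unshelve. all: by end_near. Qed.

Lemma continuous_powR_1Dnorm (r : R) :
  continuous (fun t : R => (1 + `|t|) `^ r).
Proof.
move=> t; apply: (@continuous_comp _ _ _ (fun t : R => 1 + `|t|)
  (fun b : R => b `^ r)).
  by apply: (cvgD (cvg_cst _)); exact: norm_continuous.
by apply: powR_continuous; rewrite ltr_pwDl.
Qed.

Lemma is_derive_powR1D (r x : R) : -1 < x ->
  is_derive x 1 (fun y : R => (1 + y) `^ r) (r * (1 + x) `^ (r - 1)).
Proof.
move=> x1; have x10 : 0 < 1 + x by rewrite -ltrBlDl sub0r.
have d1 : is_derive x 1 (cst 1 \+ id) (0 + 1) by exact: is_deriveD.
rewrite add0r in d1.
by have := is_derive1_comp (is_derive1_powR r x10) d1; rewrite mulr1.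
Qed.

Lemma integral_powR_1Dnorm_ge0 (s : R) : 1 < s ->
  (\int[mu]_(x in `[0%R, +oo[) ((1 + `|x|) `^ (- s))%:E = (s - 1)^-1%:E)%E.
Proof.
move=> s1; set r := 1 - s; have r0 : r < 0 by rewrite /r subr_lt0.
pose F x := r^-1 * (1 + x) `^ r.
have dF (x : R) : -1 < x -> is_derive x 1 F (r^-1 * (r * (1 + x) `^ (r - 1))).
  by move=> x1; apply: is_deriveZ; exact: is_derive_powR1D.
have x1 (x : R) : 0 <= x -> -1 < x by move=> /(lt_le_trans (ltrN10 R)).
rewrite (@ge0_continuous_FTC2y _ _ F 0 0).
- by rewrite /F addr0 powR1 mulr1 sub0e -EFinN -invrN opprB.
- by move=> x _; exact: powR_ge0.
- exact/continuous_subspaceT/continuous_powR_1Dnorm.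
- rewrite -(mulr0 r^-1); apply: cvgMr.
  exact: cvg_comp (cvg_addrl 1) (powR_cvgy_lt0 _ r0).
- by move=> x /ltW/x1/dF[].
- apply/cvg_at_right_filter/differentiable_continuous/derivable1_diffP.
  by have [] := dF 0 (x1 _ (lexx 0)).
- move=> x; rewrite in_itv/= andbT => x0.
  rewrite derive1E; have [_ ->] := dF x (x1 _ (ltW x0)).
  by rewrite mulKf ?ltr0_neq0// ger0_norm ?(ltW x0)// /r addrAC subrr add0r.
Qed.

Lemma integral_powR_1Dnorm (s : R) : 1 < s ->
  (\int[mu]_t ((1 + `|t|) `^ (- s))%:E = (2 / (s - 1))%:E)%E.
Proof.
move=> s1; rewrite ge0_symfun_integralT.
- by rewrite -set_itvcy integral_powR_1Dnorm_ge0.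
- by move=> t; exact: powR_ge0.
- exact: continuous_powR_1Dnorm.
- by move=> t; rewrite /= normrN.
Qed.

End powR_decay.

Section integral_Rn.
Context {R : realType}.
Local Notation mu := (@lebesgue_measure R).

Lemma integral_Rn_ge0 (n : nat) (F : 'rV[R]_n -> \bar R) :
  (forall x, 0 <= F x)%E -> (0 <= integral_Rn F)%E.
Proof.
elim: n F => [|n IH] F F0 /=; first exact: F0.
by apply: integral_ge0 => t _; apply: IH.
Qed.

Lemma le_integral_Rn (n : nat) (F G : 'rV[R]_n -> \bar R) :
  (forall x, 0 <= F x)%E -> (forall x, F x <= G x)%E ->
  (integral_Rn F <= integral_Rn G)%E.
Proof.
elim: n F G => [|n IH] F G F0 FG /=; first exact: FG.
apply: ge0_le_integralT => t; first exact: integral_Rn_ge0.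
exact: IH.
Qed.

Lemma row_mx_row1_ord0 (m : nat) (t : R) (v : 'rV[R]_m) :
  row_mx (\row_(j < 1) t) v ord0 ord0 = t.
Proof.
have -> : ord0 = lshift m (ord0 : 'I_1) by exact: val_inj.
by rewrite row_mxEl mxE.
Qed.

Lemma row_mx_row1_lift (m : nat) (t : R) (v : 'rV[R]_m) (i : 'I_m) :
  row_mx (\row_(j < 1) t) v ord0 (lift ord0 i) = v ord0 i.
Proof.
have -> : lift ord0 i = rshift 1 i by exact: val_inj.
by rewrite row_mxEr.
Qed.

Lemma integral_Rn_prod_le (h : R -> R) (K : R) (m : nat) (c : R) :
  (forall t, 0 <= h t) -> measurable_fun setT h ->
  (\int[mu]_t (h t)%:E <= K%:E)%E -> 0 <= c ->
  (integral_Rn (fun v : 'rV[R]_m => (c * \prod_(i < m) h (v ord0 i))%:E)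
    <= (c * K ^+ m)%:E)%E.
Proof.
move=> h0 mh hK; have K0 : 0 <= K.
  by rewrite -lee_fin (le_trans _ hK)// integral_ge0// => t _; rewrite lee_fin.
elim: m c => [|m IH] c c0 /=; first by rewrite big_ord0.
have cK0 : 0 <= c * K ^+ m by rewrite mulr_ge0 ?exprn_ge0.
apply: (@le_trans _ _ (\int[mu]_t ((c * K ^+ m)%:E * (h t)%:E))%E).
  apply: ge0_le_integralT => t.
    by apply: integral_Rn_ge0 => v; rewrite lee_fin mulr_ge0 ?prodr_ge0.
  under eq_fun do rewrite big_ord_recl row_mx_row1_ord0 mulrA.
  under eq_fun do under eq_bigr do rewrite row_mx_row1_lift.
  by rewrite -EFinM mulrAC; apply: IH; rewrite mulr_ge0.
rewrite ge0_integralZl_EFin//; last exact/measurable_EFinP.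
  by rewrite exprSr mulrA [leRHS]EFinM lee_wpmul2l.
by move=> t _; rewrite lee_fin.
Qed.

End integral_Rn.

Lemma powR_prod (R : realType) (I : Type) (r : seq I) (P : pred I)
    (F : I -> R) (q : R) : (forall i, P i -> 0 <= F i) ->
  (\prod_(i <- r | P i) F i) `^ q = \prod_(i <- r | P i) F i `^ q.
Proof.
move=> F0; pose K a b := 0 <= a /\ a `^ q = b.
suff [] : K (\prod_(i <- r | P i) F i) (\prod_(i <- r | P i) F i `^ q) by [].
apply: big_rec2 => [|i a b Pi [a0 <-]]; first by split; rewrite ?powR1.
by split; rewrite ?mulr_ge0 ?powRM ?F0.
Qed.

Section enorm.
Context {R : realType} {n : nat}.
Implicit Types x : 'rV[R]_n.

Lemma enorm_ge0 x : 0 <= enorm x.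
Proof. exact: sqrtr_ge0. Qed.

Lemma ler_coord_enorm x (i : 'I_n) : `|x ord0 i| <= enorm x.
Proof.
rewrite /enorm -sqrtr_sqr ler_sqrt ?sumr_ge0// => [|j _]; last exact: sqr_ge0.
by rewrite (bigD1 i)//= ler_wpDr// sumr_ge0// => j _; exact: sqr_ge0.
Qed.

Lemma prod_1Dnorm_le x :
  \prod_(i < n) (1 + `|x ord0 i|) <= (1 + enorm x) ^+ n.
Proof.
have -> : (1 + enorm x) ^+ n = \prod_(i < n) (1 + enorm x).
  by rewrite prodr_const card_ord.
by apply: ler_prod => i _; rewrite addr_ge0//= lerD2l ler_coord_enorm.
Qed.

Lemma powR_1Denorm_le_prod x (q : R) : q <= 0 -> (0 < n)%N ->
  (1 + enorm x) `^ q <= \prod_(i < n) (1 + `|x ord0 i|) `^ (q / n%:R).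
Proof.
move=> q0 n0; have n0R : n%:R != 0 :> R by rewrite pnatr_eq0 -lt0n.
rewrite -powR_prod => [|i _]; last by rewrite addr_ge0.
rewrite [in leLHS](_ : q = n%:R * (q / n%:R)); last by rewrite mulrC divfK.
rewrite powRrM powR_mulrn ?addr_ge0 ?enorm_ge0//.
apply: le0_ger_powR; last exact: prod_1Dnorm_le.
- by rewrite pmulr_lle0// invr_gt0 ltr0n.
- by rewrite prodr_gt0// => i _; rewrite ltr_pwDl.
Qed.

End enorm.

Section base.
Context {R : realType} {n : nat} (alpha : R) (phi : 'rV[R]_n -> \bar R).
Hypotheses (alpha_lt0 : alpha < 0) (phi_ge0 : forall x, (0 <= phi x)%E).

Lemma powbase_ge0 (e : R) (x : 'rV[R]_n) : 0 <= powbase alpha phi e x.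
Proof. by rewrite /powbase; case: (phi x) => [r| |] //; exact: powR_ge0. Qed.

Lemma coercive_linear_minorant : coercive phi ->
  exists2 k : R, 0 < k &
    forall x r, phi x = r%:E -> k * (1 + enorm x) <= 1 - alpha * r.
Proof.
move=> [c [c0 [M phi_ge]]].
have ac0 : 0 < - alpha * c by rewrite mulr_gt0 ?oppr_gt0.
have M0 : 0 < 1 + `|M| by rewrite ltr_pwDl.
pose k := Num.min (Num.min 1 (- alpha * c)) (1 + `|M|)^-1.
have k0 : 0 < k by rewrite !lt_min ltr01 ac0 invr_gt0 M0.
exists k => // x r phix.
have r0 : 0 <= r by rewrite -lee_fin -phix.
have k1 : k <= 1 by rewrite !ge_min lexx.
have kac : k <= - alpha * c by rewrite !ge_min lexx orbT.
have x0 := enorm_ge0 x.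
have [Mx|xM] := leP M (enorm x).
  by have := phi_ge x Mx; rewrite phix lee_fin; nra.
have : k * (1 + enorm x) <= (1 + `|M|)^-1 * (1 + `|M|).
  apply: ler_pM; rewrite ?(ltW k0) ?addr_ge0 ?ge_min ?lexx ?orbT//.
  by rewrite lerD2l (le_trans (ltW xM)) ?ler_norm.
by rewrite mulVf ?gt_eqF//; nra.
Qed.

Lemma powbase_le_prod (k p e : R) (x : 'rV[R]_n) : 0 < k ->
    (forall r, phi x = r%:E -> k * (1 + enorm x) <= 1 - alpha * r) ->
    0 <= p -> p + e <= 0 -> (0 < n)%N ->
  enorm x `^ p * powbase alpha phi e x <=
    k `^ e * \prod_(i < n) (1 + `|x ord0 i|) `^ ((p + e) / n%:R).
Proof.
move=> k0 phi_ge p0 pe0 n0.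
have rhs0 : 0 <= k `^ e * \prod_(i < n) (1 + `|x ord0 i|) `^ ((p + e) / n%:R).
  by rewrite mulr_ge0 ?powR_ge0 ?prodr_ge0// => i _; exact: powR_ge0.
rewrite /powbase; case phix: (phi x) => [r| |]; rewrite ?mulr0//.
have x1 : 0 < 1 + enorm x by rewrite ltr_pwDl ?enorm_ge0.
apply: (@le_trans _ _ ((1 + enorm x) `^ p * (k `^ e * (1 + enorm x) `^ e))).
  apply: ler_pM; rewrite ?powR_ge0//.
    by apply: (ge0_ler_powR p0); rewrite ?nnegrE ?enorm_ge0 ?(ltW x1) ?lerDr.
  rewrite -powRM ?(ltW k0) ?(ltW x1)//.
  by apply: le0_ger_powR; rewrite ?mulr_gt0 ?phi_ge//; lra.
rewrite mulrCA -powRD ?(gt_eqF x1) ?implybT//.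
by rewrite ler_wpM2l ?powR_ge0 ?powR_1Denorm_le_prod.
Qed.

Lemma integral_powbase_lt_pinfty (p e : R) : coercive phi -> (0 < n)%N ->
    0 <= p -> e + n%:R + p < 0 ->
  (integral_Rn (fun x => (enorm x `^ p * powbase alpha phi e x)%:E) < +oo)%E.
Proof.
move=> phi_coercive n0 p0 enp.
have [k k0 phi_ge] := coercive_linear_minorant phi_coercive.
have n0R : 0 < n%:R :> R by rewrite ltr0n.
set q := (p + e) / n%:R.
have q1 : 1 < - q by rewrite /q -mulNr ltr_pdivlMr// mul1r; lra.
pose h (t : R) := (1 + `|t|) `^ q.
have int_h : (\int[lebesgue_measure]_t (h t)%:E <= (2 / (- q - 1))%:E)%E.
  by have := integral_powR_1Dnorm _ q1; rewrite opprK => ->.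
have mh : measurable_fun setT h.
  by apply: continuous_measurable_fun; exact: continuous_powR_1Dnorm.
have prod_le := integral_Rn_prod_le _ _ n _
  (fun t => powR_ge0 _ _) mh int_h (powR_ge0 k e).
apply: le_lt_trans (le_trans _ prod_le) (ltry _).
apply: le_integral_Rn => x.
  by rewrite lee_fin mulr_ge0 ?powR_ge0 ?powbase_ge0.
by rewrite lee_fin powbase_le_prod//; [exact: phi_ge | lra].
Qed.

Lemma fCalpha_powR (x : 'rV[R]_n) :
  (fCalpha alpha phi x) `^ (1 - alpha) = powbase alpha phi (alpha^-1 - 1) x.
Proof.
rewrite /fCalpha /powbase; case: (phi x) => [r| |].
- by rewrite -powRrM mulrBr mulr1 mulVf ?ltr0_neq0.
- by rewrite powR0// gt_eqF// subr_gt0 (lt_trans alpha_lt0).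
- by rewrite powR0// gt_eqF// subr_gt0 (lt_trans alpha_lt0).
Qed.

End base.

Lemma invrD_lt0 {R : realFieldType} (alpha D : R) : alpha < 0 -> 0 < D ->
  - D^-1 < alpha -> alpha^-1 + D < 0.
Proof.
move=> a0 D0; rewrite -(ltr_pM2r D0) mulNr mulVf ?gt_eqF// => aD.
have -> : alpha^-1 + D = alpha^-1 * (1 + alpha * D).
  by rewrite mulrDr mulr1 mulrA mulVf ?ltr0_neq0// mul1r.
by rewrite nmulr_rlt0 ?invr_lt0//; lra.
Qed.

Theorem lemma2p2 (R : realType) (n : nat) (alpha : R)
    (phi : 'rV[R]_n -> \bar R) :
  alpha < 0 -> is_base phi ->
  (forall l p : R, 0 <= l -> l < n%:R -> 0 <= p ->
     - (n%:R - l + p)^-1 < alpha ->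
     (integral_Rn (fun x => (powR (enorm x) p *
                              powbase alpha phi (alpha^-1 - l) x)%:E)
       < +oo)%E)
  /\
  (- (n%:R)^-1 < alpha ->
     (integral_Rn (fun x => (fCalpha alpha phi x)%:E) < +oo)%E /\
     (integral_Rn (fun x => (powR (fCalpha alpha phi x) (1 - alpha))%:E)
       < +oo)%E).
Proof.
move=> a0 [_ phi0 phi_coercive]; split.
  move=> l p l0 ln p0 lp_lt.
  have n0 : (0 < n)%N by rewrite -(ltr0n R) (le_lt_trans l0).
  have D0 : 0 < n%:R - l + p by lra.
  have lt0 := invrD_lt0 _ _ a0 D0 lp_lt.
  by apply: integral_powbase_lt_pinfty => //; lra.
move=> n_lt; have n0 : (0 < n)%N.
  by rewrite lt0n; apply: contraTneq n_lt => ->; rewrite invr0 oppr0 -leNgt ltW.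
have /(invrD_lt0 _ _ a0)/(_ n_lt) lt0 : 0 < n%:R :> R by rewrite ltr0n.
split.
  rewrite (_ : (fun x => _) = fun x => (enorm x `^ 0 * fCalpha alpha phi x)%:E).
    by rewrite integral_powbase_lt_pinfty//; lra.
  by apply/funext => x; rewrite powRr0 mul1r.
rewrite (_ : (fun x => _) =
  fun x => (enorm x `^ 0 * powbase alpha phi (alpha^-1 - 1) x)%:E).
  by rewrite integral_powbase_lt_pinfty//; lra.
by apply/funext => x; rewrite powRr0 mul1r fCalpha_powR.
Qed.
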